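(* Let $G=\mathbb Z$ with the discrete topology, $Y=(0,\infty)\subset\mathbb R$, and let $\theta$ be the partial action of $\mathbb Z$ on $Y$ with $Y_n=(\max\{0,n\},\infty)$ and $\theta_n\colon Y_{-n}\to Y_n$, $y\mapsto n+y$. Then the enveloping space $Y_G$ of $\theta$ is $G$-homeomorphic to $\mathbb R$ endowed with the global action $\mathbb Z\times\mathbb R\to\mathbb R$, $(n,t)\mapsto n+t$.
   Context: The enveloping space is $Y_G=(G\times Y)/R$ with the quotient topology, where $(n,y)R(m,z)$ iff $y\in Y_{m-n}$ and $\theta_{n-m}(y)=z$, with the global action $k\cdot[n,y]=[k+n,y]$. A $G$-homeomorphism is a homeomorphism $f$ with $f(k\cdot x)=k\cdot f(x)$ for all $k,x$. *)

From HB Require Import structures.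
From mathcomp Require Import all_boot all_order all_algebra.
From mathcomp Require Import all_classical all_reals topology normedtype.
Set Implicit Arguments. Unset Strict Implicit. Unset Printing Implicit Defensive.
Import Order.TTheory GRing.Theory Num.Theory.
Import numFieldNormedType.Exports.
Local Open Scope classical_set_scope.
Local Open Scope ring_scope.

Section Envelope.
Variable R : realType.

Definition Yspace : set R := [set y | 0 < y].

Definition Ydom (n : int) : set R := [set y | Num.max 0 (n%:~R) < y].

Definition theta (n : int) (y : R) : R := n%:~R + y.

Definition GY : set (int * R) := [set p | Yspace p.2].

Definition Rrel (p q : int * R) : Prop :=
  GY p /\ GY q /\ Ydom (q.1 - p.1) p.2 /\ theta (p.1 - q.1) p.2 = q.2.

(* Open sets of G x Y, G = Z discrete, Y with the subspace topology of R:
   U is open iff every slice {y in Y | (n,y) in U} is (relatively) open in Y. *)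
Definition openGY (U : set (int * R)) : Prop :=
  U `<=` GY /\
  forall n : int, exists V : set R, open V /\
    forall y, Yspace y -> (U (n, y) <-> V y).

Definition cls (p : int * R) : set (int * R) := [set q | Rrel p q].

(* The enveloping space Y_G = (G x Y)/R : the set of classes [n,y]. *)
Definition YG : Type := {C : set (int * R) | exists p, GY p /\ C = cls p}.

Lemma mkYG_proof (n : int) (y : R) (hy : 0 < y) :
  exists p, GY p /\ cls (n, y) = cls p.
Proof. by exists (n, y). Qed.

Definition mkYG (n : int) (y : R) (hy : 0 < y) : YG :=
  exist _ (cls (n, y)) (@mkYG_proof n y hy).

Definition openYG (U : set YG) : Prop :=
  openGY [set p | GY p /\ exists C, U C /\ proj1_sig C = cls p].

(* f : Y_G -> R is a G-homeomorphism onto R with the global action (n,t) |-> n+t,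
   the action on Y_G being k . [n,y] = [k+n,y]. *)
Definition G_homeomorphism (f : YG -> R) : Prop :=
  (exists g : R -> YG,
      cancel f g /\ cancel g f /\
      (forall V : set R, open V -> openYG (f @^-1` V)) /\
      (forall U : set YG, openYG U -> open (g @^-1` U))) /\
  (forall (k n : int) (y : R) (hy : 0 < y),
      f (@mkYG (k + n) y hy) = k%:~R + f (@mkYG n y hy)).

End Envelope.

From HB Require Import structures.
From mathcomp Require Import all_boot all_order all_algebra.
From mathcomp Require Import all_classical all_reals topology normedtype.
From mathcomp Require Import lra.
Set Implicit Arguments. Unset Strict Implicit. Unset Printing Implicit Defensive.
Import Order.TTheory GRing.Theory Num.Theory.
Import numFieldNormedType.Exports.
Local Open Scope classical_set_scope.
Local Open Scope ring_scope.

(** The relation defining [Y_G] identifies [(n, y)] and [(m, z)] exactly when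
    [n + y = m + z], so the sum map descends to a bijection [f : Y_G -> R],
    equivariant by construction, with inverse [t |-> [floor t - 1, t - floor t + 1]].
    The [n]-th slice of the preimage of an open [V] under the quotient map
    followed by [f] is the translate [V - n], so [f] is continuous; and the
    preimage of an open [U] under the inverse is the union over [n] of the
    open sets [(n, oo) ∩ (n + U_n)], where [U_n] is an open set cutting out
    the [n]-th slice of the preimage of [U] in [G × Y]. *)

Lemma open_addl_preimage (K : numFieldType) (V : normedModType K) (c : V)
    (A : set V) :
  open A -> open [set x | A (c + x)].
Proof.
apply: (@open_comp _ _ (fun x => c + x)) => x _.
exact: cvgD (cvg_cst c) cvg_id.
Qed.

Section Envelope.
Variable R : realType.

Definition envelope_sum (p : int * R) : R := p.1%:~R + p.2.

Lemma RrelE (p q : int * R) :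
  Rrel p q <-> [/\ GY p, GY q & envelope_sum p = envelope_sum q].
Proof.
case: p => n y; case: q => m z.
rewrite /Rrel /GY /Ydom /theta /Yspace /envelope_sum /= !intrB.
split=> [[hy [hz [_ e]]] | [hy hz e]]; first by split=> //; lra.
by do !split=> //; [rewrite gt_max hy /=|]; lra.
Qed.

Lemma eq_cls (p q : int * R) : GY p -> GY q ->
  cls p = cls q <-> envelope_sum p = envelope_sum q.
Proof.
move=> hp hq; split=> [epq | e].
  by have /RrelE[_ _] : cls p q by rewrite epq; apply/RrelE.
apply/funext => r; apply/propext.
by split=> /RrelE[_ hr er]; apply/RrelE; split=> //; rewrite -er ?e.
Qed.

Lemma YG_val_inj : injective (fun C : YG R => proj1_sig C).
Proof.
by case=> [c hc] [d hd] /= edc; subst d; apply: eq_exist.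
Qed.

Definition YG_sum (C : YG R) : R := envelope_sum (projT1 (cid (proj2_sig C))).

Lemma YG_sumE (C : YG R) (p : int * R) :
  GY p -> proj1_sig C = cls p -> YG_sum C = envelope_sum p.
Proof.
move=> hp eC; rewrite /YG_sum; case: cid => q [hq eq] /=.
by apply/eq_cls => //; rewrite -eq.
Qed.

Lemma YG_sum_mk (n : int) (y : R) (hy : 0 < y) :
  YG_sum (mkYG n hy) = n%:~R + y.
Proof. exact: (YG_sumE (p := (n, y))). Qed.

Lemma YG_sum_translate (k n : int) (y : R) (hy : 0 < y) :
  YG_sum (mkYG (k + n) hy) = k%:~R + YG_sum (mkYG n hy).
Proof. by rewrite !YG_sum_mk intrD addrA. Qed.

(* Not [floor t]: for integral [t] that leaves [y = 0], outside [Y]. *)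
Definition YG_index (t : R) : int := Num.floor t - 1.

Lemma YG_index_lt (t : R) : 0 < t - (YG_index t)%:~R.
Proof. rewrite /YG_index intrB; have := floor_le t; lra. Qed.

Definition YG_of (t : R) : YG R := mkYG (YG_index t) (YG_index_lt t).

Lemma YG_sumK : cancel YG_sum YG_of.
Proof.
move=> C; apply: YG_val_inj => /=.
have [p [hp eC]] := proj2_sig C.
rewrite eC (YG_sumE hp eC); apply/eq_cls => //; first exact: YG_index_lt.
by rewrite /envelope_sum /=; lra.
Qed.

Lemma YG_ofK : cancel YG_of YG_sum.
Proof. by move=> t; rewrite YG_sum_mk addrC subrK. Qed.

Lemma YG_of_sum_mk (n : int) (y : R) (hy : 0 < y) :
  YG_of (n%:~R + y) = mkYG n hy.
Proof. by rewrite -YG_sum_mk YG_sumK. Qed.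

Definition quotient_preimage (U : set (YG R)) : set (int * R) :=
  [set p | GY p /\ exists C, U C /\ proj1_sig C = cls p].

Lemma quotient_preimage_mk (U : set (YG R)) (n : int) (y : R) (hy : 0 < y) :
  quotient_preimage U (n, y) <-> U (mkYG n hy).
Proof.
split=> [[_ [C [UC eC]]] | Umk]; last by split=> //; exists (mkYG n hy).
by have -> : mkYG n hy = C by apply: YG_val_inj.
Qed.

Lemma openYG_preimage_YG_sum (V : set R) : open V -> openYG (YG_sum @^-1` V).
Proof.
move=> oV; split=> [p [] //|n].
exists [set y | V (n%:~R + y)]; split; first exact: open_addl_preimage.
move=> y hy; apply: iff_trans (quotient_preimage_mk _ _ hy) _.
by rewrite /= YG_sum_mk.
Qed.

Lemma open_preimage_YG_of (U : set (YG R)) : openYG U -> open (YG_of @^-1` U).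
Proof.
move=> [_ /(_ _)/cid slice].
pose W n := projT1 (slice n).
have [oW UW] : (forall n, open (W n)) /\
    (forall n y, 0 < y -> quotient_preimage U (n, y) <-> W n y).
  by split=> n; rewrite /W; case: (slice n) => ? [].
have mem_slice n t (ht : 0 < - n%:~R + t) : U (YG_of t) <-> W n (- n%:~R + t).
  by rewrite -(UW _ _ ht) (quotient_preimage_mk _ _ ht) -YG_of_sum_mk addNKr.
suff -> : YG_of @^-1` U =
    \bigcup_(n in setT) [set t | n%:~R < t /\ W n (- n%:~R + t)].
  apply: bigcup_open => n _; apply: openI; first exact: open_gt.
  exact: open_addl_preimage.
apply/seteqP; split=> [t Ut | t [n _ [nt Wt]]] /=.
  have ht : 0 < - (YG_index t)%:~R + t by rewrite addrC; exact: YG_index_lt.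
  exists (YG_index t) => //; split; first lra.
  exact: (mem_slice _ _ ht).1.
have ht : 0 < - n%:~R + t by lra.
exact: (mem_slice _ _ ht).2.
Qed.

End Envelope.

Theorem proposition3p12 (R : realType) :
  exists f : YG R -> R, G_homeomorphism f.
Proof.
exists (@YG_sum R); split; last exact: YG_sum_translate.
exists (@YG_of R); split; first exact: YG_sumK.
split; first exact: YG_ofK.
split; [exact: openYG_preimage_YG_sum | exact: open_preimage_YG_of].
Qed.
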